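(* Let $k,k'\ge1$ be integers. For $X\in\mathcal{P}$ let $\mathcal{C}^{-1}(X)=\{(P,Q)\in\mathcal{P}^2:[P,Q]\in\{2iX,-2iX\}\}$ and $\mathcal{S}_X=\mathcal{C}^{-1}(X)\cap(\mathcal{P}_k\times\mathcal{P}_{k'})$. For $(P,Q)\in\mathcal{S}_X$ define its type as $(|\mathrm{supp}(P)|,|\mathrm{supp}(P)\cap\mathrm{supp}(Q)|)$, and let $\mathcal{S}_X[j,l]$ be the set of elements of $\mathcal{S}_X$ of type $(j,l)$. Then: (a) for every $X\in\mathcal{P}$ there are at most $k^2$ distinct types among elements of $\mathcal{S}_X$; (b) if $(P,Q),(P',Q')\in\mathcal{S}_X[j,l]$, then $\mathrm{supp}(P)\cap\mathrm{supp}(Q')\neq\varnothing$.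
   Context: $\mathcal{P}$ denotes the set of $n$-fold tensor products of Pauli matrices $\{I,\sigma_x,\sigma_y,\sigma_z\}$; $\mathrm{supp}(P)\subseteq[n]$ is the set of qubits on which $P$ acts non-trivially; $\mathcal{P}_j$ is the set of Paulis with $|\mathrm{supp}|\le j$. $[A,B]=AB-BA$. *)

(* n-qubit operators are complex 2^n x 2^n matrices over algC,
   indexed by computational basis states {ffun 'I_n -> 'I_2}. *)
From mathcomp Require Import all_boot all_order all_algebra all_field.
Set Implicit Arguments. Unset Strict Implicit. Unset Printing Implicit Defensive.
Import Order.TTheory GRing.Theory Num.Theory.
Local Open Scope ring_scope.

(* single-qubit Pauli labels: 0 = I, 1 = sigma_x, 2 = sigma_y, 3 = sigma_z *)
Definition sigma (a : 'I_4) (r c : 'I_2) : algC :=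
  match val a, val r, val c with
  | 0, 0, 0 => 1 | 0, 1, 1 => 1
  | 1, 0, 1 => 1 | 1, 1, 0 => 1
  | 2, 0, 1 => - 'i | 2, 1, 0 => 'i
  | 3, 0, 0 => 1 | 3, 1, 1 => -1
  | _, _, _ => 0
  end.

(* an n-fold tensor product of Pauli matrices (element of the set P) *)
Definition pauli (n : nat) := {ffun 'I_n -> 'I_4}.

Definition basis (n : nat) := {ffun 'I_n -> 'I_2}.
Definition dim (n : nat) := #|{: basis n}|.
Definition bidx (n : nat) (a : 'I_(dim n)) : basis n := enum_val a.

Definition pmat (n : nat) (P : pauli n) : 'M[algC]_(dim n) :=
  \matrix_(a, b) \prod_(i < n) sigma (P i) (bidx a i) (bidx b i).

Definition commutator (N : nat) (A B : 'M[algC]_N) : 'M[algC]_N := A *m B - B *m A.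

Definition supp (n : nat) (P : pauli n) : {set 'I_n} := [set i | P i != 0%R].

Definition Cinv (n : nat) (X P Q : pauli n) : Prop :=
  commutator (pmat P) (pmat Q) = (2%:R * 'i) *: pmat X \/
  commutator (pmat P) (pmat Q) = - (2%:R * 'i) *: pmat X.

Definition SX (n k k' : nat) (X P Q : pauli n) : Prop :=
  Cinv X P Q /\ (#|supp P| <= k)%N /\ (#|supp Q| <= k')%N.

Definition ptype (n : nat) (P Q : pauli n) : nat * nat :=
  (#|supp P|, #|supp P :&: supp Q|).

(* Single-qubit Pauli matrices multiply as sigma_p sigma_q = w(p,q) sigma_(p xor q), so
   [P,Q] is a scalar multiple of the Pauli string P xor Q, and the scalar vanishes
   unless P and Q anticommute at some site.  Distinct Pauli strings are orthogonal for
   the trace form, hence [P,Q] = +-2iX forces X = P xor Q together with an anticommuting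
   site in supp P n supp Q.  Every type (j,l) thus has 1 <= l <= j <= k, which gives (a).
   For (b), if supp P and supp Q' were disjoint, P' would coincide with X on supp P, so
   at the sites of supp P \ supp P' we have P = Q.  As |supp P| = |supp P'|,
   l = |supp P' n supp Q'| <= |supp P' \ supp P| = |supp P \ supp P'| is at most the
   number of sites of supp P n supp Q where P = Q, which is < l because of the
   anticommuting site. *)

From mathcomp Require Import all_boot all_order all_algebra all_field.
Import Order.TTheory GRing.Theory Num.Theory.
Set Implicit Arguments. Unset Strict Implicit. Unset Printing Implicit Defensive.
Local Open Scope ring_scope.

Ltac case_label p := case: p => [[|[|[|[|?]]]] //] ?.

Lemma lxor_label_lt (p q : 'I_4) : (Nat.lxor p q < 4)%N.
Proof. by case_label p; case_label q. Qed.

(* Up to a phase, single-qubit Pauli matrices multiply their labels by bitwise xor. *)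
Definition pmul (p q : 'I_4) : 'I_4 := Ordinal (lxor_label_lt p q).

Definition pphase (p q : 'I_4) : algC :=
  match val p, val q with
  | 1, 2 | 2, 3 | 3, 1 => 'i
  | 2, 1 | 3, 2 | 1, 3 => - 'i
  | _, _ => 1
  end.

Definition anticomm (p q : 'I_4) : bool := [&& p != 0, q != 0 & p != q].

Lemma sigma_mul (p q : 'I_4) (r c : 'I_2) :
  \sum_(m < 2) sigma p r m * sigma q m c = pphase p q * sigma (pmul p q) r c.
Proof.
rewrite !big_ord_recr big_ord0 /= add0r.
case_label p; case_label q; case: r => [[|[|?]] //] ?; case: c => [[|[|?]] //] ?;
by rewrite /sigma /pphase /= ?(mulrN, mulNr, mulr1, mul1r, mulr0, mul0r, addr0,
  add0r, opprK, mulCii, oppr0, subr0).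
Qed.

Lemma pmulC : commutative pmul.
Proof. by move=> p q; apply: val_inj; case_label p; case_label q. Qed.

Lemma pmul_eq0 p q : (pmul p q == 0) = (p == q).
Proof. by case_label p; case_label q. Qed.

Lemma pphaseC p q : pphase q p = if anticomm p q then - pphase p q else pphase p q.
Proof. by case_label p; case_label q; rewrite /pphase /anticomm /= ?opprK. Qed.

Lemma pphase_id p : pphase p p = 1.
Proof. by case_label p. Qed.

Lemma sigma_trace p : \sum_(m < 2) sigma p m m = if p == 0 then 2 else 0.
Proof.
rewrite !big_ord_recr big_ord0 /= add0r.
by case_label p; rewrite /sigma /= ?addr0 ?subrr.
Qed.

Section PauliStrings.
Variable n : nat.
Implicit Types P Q X Y Z : pauli n.

Definition pauli_prod P Q : pauli n := [ffun i => pmul (P i) (Q i)].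

Lemma pauli_prodE P Q i : pauli_prod P Q i = pmul (P i) (Q i).
Proof. by rewrite ffunE. Qed.

Lemma pauli_prodC : commutative pauli_prod.
Proof. by move=> P Q; apply/ffunP => i; rewrite !pauli_prodE pmulC. Qed.

Lemma sum_basis_prod (F : 'I_n -> 'I_2 -> algC) :
  \sum_(a < dim n) \prod_i F i (bidx a i) = \prod_i \sum_(m < 2) F i m.
Proof.
rewrite bigA_distr_bigA /bidx.
by rewrite (big_enum_val (fun v : basis n => \prod_i F i (v i)) (A := xpredT)).
Qed.

Lemma pmat_mul P Q :
  pmat P *m pmat Q = (\prod_i pphase (P i) (Q i)) *: pmat (pauli_prod P Q).
Proof.
apply/matrixP => a b; rewrite /pmat !mxE.
under [LHS]eq_bigr do rewrite !mxE -big_split /=.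
rewrite (sum_basis_prod (fun i m => sigma (P i) (bidx a i) m * sigma (Q i) m (bidx b i))).
under eq_bigr do rewrite sigma_mul.
by rewrite big_split /=; congr (_ * _); apply: eq_bigr => i _; rewrite pauli_prodE.
Qed.

Lemma trace_pmat P : \tr (pmat P) = \prod_i (if P i == 0 then 2 else 0).
Proof.
rewrite /mxtrace /pmat; under [LHS]eq_bigr do rewrite mxE.
rewrite (sum_basis_prod (fun i m => sigma (P i) m m)).
by under eq_bigr do rewrite sigma_trace.
Qed.

Lemma trace_pmat_mul P Q :
  \tr (pmat P *m pmat Q) = if P == Q then 2 ^+ n else 0.
Proof.
rewrite pmat_mul mxtraceZ trace_pmat; case: eqP => [<-|/eqP neqPQ].
  rewrite big1 ?mul1r => [|i _]; last exact: pphase_id.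
  rewrite -[X in 2 ^+ X]card_ord -prodr_const.
  by apply: eq_bigr => i _; rewrite pauli_prodE pmul_eq0 eqxx.
have [i neqPQi] : exists i, P i != Q i.
  apply/existsP; apply: contraNT neqPQ => /existsPn eqPQ.
  by apply/eqP/ffunP => i; apply/eqP/negPn/eqPQ.
by rewrite [X in _ * X](bigD1 i) //= pauli_prodE pmul_eq0 (negbTE neqPQi) mul0r mulr0.
Qed.

Lemma pmat_neq0 P : pmat P != 0.
Proof.
apply/eqP => P0; have := trace_pmat_mul P P.
by rewrite P0 mul0mx mxtrace0 eqxx => /eqP; rewrite eq_sym expf_eq0 pnatr_eq0 andbF.
Qed.

Lemma pmat_scale_inj (d e : algC) Y Z :
  e != 0 -> d *: pmat Y = e *: pmat Z -> Y = Z.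
Proof.
move=> e_neq0 /(congr1 (fun M => \tr (M *m pmat Z))).
rewrite -!scalemxAl !mxtraceZ !trace_pmat_mul eqxx; case: eqP => // _.
by move/esym/eqP; rewrite mulr0 mulf_eq0 (negbTE e_neq0) expf_eq0 pnatr_eq0 andbF.
Qed.

Lemma commutator_pmat P Q :
  commutator (pmat P) (pmat Q) =
  (\prod_i pphase (P i) (Q i) - \prod_i pphase (Q i) (P i)) *: pmat (pauli_prod P Q).
Proof. by rewrite /commutator !pmat_mul [pauli_prod Q P]pauli_prodC scalerBl. Qed.

Lemma commutator_pmat_eq0 P Q :
  (forall i, ~~ anticomm (P i) (Q i)) -> commutator (pmat P) (pmat Q) = 0.
Proof.
move=> commPQ; rewrite commutator_pmat.
under [X in _ - X]eq_bigr => i _ do rewrite pphaseC (negbTE (commPQ i)).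
by rewrite subrr scale0r.
Qed.

Lemma Cinv_commutator X P Q : Cinv X P Q ->
  exists2 e, e != 0 & commutator (pmat P) (pmat Q) = e *: pmat X.
Proof.
have two_i_neq0 : 2%:R * 'i != 0 :> algC by rewrite mulf_neq0 ?neq0Ci ?pnatr_eq0.
by case=> ->; [exists (2%:R * 'i) | exists (- (2%:R * 'i)); rewrite ?oppr_eq0].
Qed.

Lemma Cinv_anticomm X P Q : Cinv X P Q -> exists i, anticomm (P i) (Q i).
Proof.
case/Cinv_commutator=> e e_neq0 commPQ.
have [/existsP //|/existsPn commute] := boolP [exists i, anticomm (P i) (Q i)].
have : e *: pmat X == 0 by rewrite -commPQ commutator_pmat_eq0.
by rewrite scaler_eq0 (negbTE e_neq0) (negbTE (pmat_neq0 X)).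
Qed.

Lemma Cinv_pauli_prod X P Q : Cinv X P Q -> X = pauli_prod P Q.
Proof.
case/Cinv_commutator=> e e_neq0 commPQ; apply/esym/(pmat_scale_inj e_neq0).
by rewrite -commPQ commutator_pmat.
Qed.

Lemma in_supp P i : (i \in supp P) = (P i != 0).
Proof. by rewrite inE. Qed.

Definition agreement P Q : {set 'I_n} := [set i in supp P | P i == Q i].

Lemma anticomm_overlap P Q i : anticomm (P i) (Q i) -> i \in supp P :&: supp Q.
Proof. by rewrite inE !in_supp => /and3P [-> ->]. Qed.

Lemma card_agreement_lt P Q i : anticomm (P i) (Q i) ->
  (#|agreement P Q| < #|supp P :&: supp Q|)%N.
Proof.
move=> PQi; apply/proper_card/properP; split.
  apply/subsetP => j; rewrite !inE => /andP [Pj /eqP PQj].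
  by rewrite -PQj Pj.
exists i; first exact: anticomm_overlap.
by case/and3P: PQi => _ _ /negbTE PQi; rewrite inE PQi andbF.
Qed.

Lemma card_overlap_le_agreement P Q P' Q' :
  pauli_prod P Q = pauli_prod P' Q' -> supp P :&: supp Q' = set0 ->
  #|supp P| = #|supp P'| -> (#|supp P' :&: supp Q'| <= #|agreement P Q|)%N.
Proof.
move=> eqPQ disjPQ' eq_card.
have Q'0 j : P j != 0 -> Q' j = 0.
  move=> Pj; have : j \notin supp P :&: supp Q' by rewrite disjPQ' inE.
  by rewrite inE !in_supp Pj negbK => /eqP.
have overlap_sub : supp P' :&: supp Q' \subset supp P' :\: supp P.
  apply/subsetP => j; rewrite !inE => /andP [P'j Q'j]; rewrite P'j andbT.
  by apply: contraNN Q'j => /Q'0 ->.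
have lost_sub : supp P :\: supp P' \subset agreement P Q.
  apply/subsetP => j; rewrite !inE => /andP [P'j Pj]; rewrite Pj /=.
  move: P'j; rewrite negbK => /eqP P'j.
  by rewrite -pmul_eq0 -pauli_prodE eqPQ pauli_prodE P'j (Q'0 _ Pj).
have eq_diff : #|supp P' :\: supp P| = #|supp P :\: supp P'|.
  by apply/eqP; rewrite -(eqn_add2l #|supp P' :&: supp P|) cardsID setIC cardsID eq_card.
apply: leq_trans (subset_leq_card overlap_sub) _.
by rewrite eq_diff subset_leq_card.
Qed.

Lemma Cinv_type_range X P Q :
  Cinv X P Q -> (0 < #|supp P :&: supp Q| <= #|supp P|)%N.
Proof.
case/Cinv_anticomm=> i /anticomm_overlap PQi.
by rewrite (subset_leq_card (subsetIl _ _)) andbT; apply/card_gt0P; exists i.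
Qed.

End PauliStrings.

Theorem lemma3p8 (n k k' : nat) (hk : (1 <= k)%N) (hk' : (1 <= k')%N) :
  (* (a) at most k^2 distinct types *)
  (forall (X : pauli n) (s : seq (nat * nat)),
     uniq s ->
     (forall t, t \in s -> exists P Q : pauli n, SX k k' X P Q /\ ptype P Q = t) ->
     (size s <= k ^ 2)%N) /\
  (* (b) *)
  (forall (X : pauli n) (j l : nat) (P Q P' Q' : pauli n),
     SX k k' X P Q -> SX k k' X P' Q' ->
     ptype P Q = (j, l) -> ptype P' Q' = (j, l) ->
     supp P :&: supp Q' != set0).
Proof.
split=> [X s uniq_s typed_s | X j l P Q P' Q' [HC _] [HC' _]].
  have -> : (k ^ 2 = size [seq (x, y) | x <- iota 1 k, y <- iota 1 k])%N.
    by rewrite size_allpairs size_iota mulnn.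
  apply: uniq_leq_size uniq_s _ => _ /typed_s [P [Q [[HC [Pk _]] <-]]].
  have /andP [l_gt0 l_le_j] := Cinv_type_range HC.
  by apply: allpairs_f; rewrite mem_iota add1n ltnS ?(leq_trans l_le_j) // (leq_trans l_gt0).
rewrite /ptype => -[jP lPQ] [jP' lPQ']; apply/eqP => disjPQ'.
have [i PQi] := Cinv_anticomm HC.
have eqPQ : pauli_prod P Q = pauli_prod P' Q'.
  by rewrite -(Cinv_pauli_prod HC) -(Cinv_pauli_prod HC').
have := card_overlap_le_agreement eqPQ disjPQ' (etrans jP (esym jP')).
by rewrite lPQ' -lPQ leqNgt (card_agreement_lt PQi).
Qed.
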